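(* In any environment $(u_S,u_R)$ satisfying scant-indifferences, for every $\omega\in\Omega$ and all $a_i\ne a_j$ in $A$, $u_S(a_i,\omega)\ne u_S(a_j,\omega)$.
   Context: $A=\{a_1,\dots,a_{|A|}\}$ and $\Omega$ are finite nonempty sets; an environment is a pair of functions $u_S,u_R:A\times\Omega\to[0,1]$. For $a\in A$ let $\mathbf u_S(a)=u_S(a,\cdot)\in\mathbb R^{|\Omega|}$ and $\mathbf u_R(a)=u_R(a,\cdot)$. For each $i$, the expanded-indifference matrix $T^i$ has $|\Omega|$ columns and rows: $\mathbf u_S(a_j)-\mathbf u_S(a_i)$ for each $j\ne i$, then $\mathbf u_R(a_j)-\mathbf u_R(a_i)$ for each $j\ne i$, then the rows of the $|\Omega|\times|\Omega|$ identity matrix. A row-submatrix is obtained by deleting some rows. The environment satisfies scant-indifferences if for each $i$ every row-submatrix of $T^i$ has full rank. *)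

From HB Require Import structures.
From mathcomp Require Import all_boot all_order all_algebra.
From mathcomp Require Import reals.
Set Implicit Arguments. Unset Strict Implicit. Unset Printing Implicit Defensive.
Import Order.TTheory GRing.Theory Num.Theory.
Local Open Scope ring_scope.

(* Actions A = {a_0,...,a_(nA-1)} = 'I_nA, states Omega = 'I_nO.
   An environment is a pair uS uR : 'I_nA -> 'I_nO -> R with values in [0,1]. *)

Definition environment (R : realType) (nA nO : nat)
  (uS uR : 'I_nA -> 'I_nO -> R) : Prop :=
  forall a w, [/\ 0 <= uS a w, uS a w <= 1, 0 <= uR a w & uR a w <= 1].

(* Row labels of the expanded-indifference matrices:
   inl (false, j) : row u_S(a_j) - u_S(a_i)
   inl (true,  j) : row u_R(a_j) - u_R(a_i)
   inr k          : k-th row of the |Omega| x |Omega| identity matrix. *)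
Definition rowlab (nA nO : nat) : finType := ((bool * 'I_nA) + 'I_nO)%type.

(* The rows actually present in T^i (those with j <> i). *)
Definition Trows (nA nO : nat) (i : 'I_nA) : {set rowlab nA nO} :=
  [set x | match x with inl (_, j) => j != i | inr _ => true end].

Definition Trow (R : realType) (nA nO : nat) (uS uR : 'I_nA -> 'I_nO -> R)
  (i : 'I_nA) (x : rowlab nA nO) : 'rV[R]_nO :=
  match x with
  | inl (false, j) => \row_w (uS j w - uS i w)
  | inl (true, j)  => \row_w (uR j w - uR i w)
  | inr k => \row_w (if w == k then 1 else 0)
  end.

Definition Tsub (R : realType) (nA nO : nat) (uS uR : 'I_nA -> 'I_nO -> R)
  (i : 'I_nA) (S : {set rowlab nA nO}) : 'M[R]_(#|S|, nO) :=
  \matrix_(k < #|S|) Trow uS uR i (enum_val k).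

Definition full_rank (R : fieldType) (m n : nat) (M : 'M[R]_(m, n)) : bool :=
  \rank M == minn m n.

Definition scant_indifferences (R : realType) (nA nO : nat)
  (uS uR : 'I_nA -> 'I_nO -> R) : Prop :=
  forall (i : 'I_nA) (S : {set rowlab nA nO}),
    S \subset Trows nO i -> full_rank (Tsub uS uR i S).

From HB Require Import structures.
From mathcomp Require Import all_boot all_order all_algebra.
From mathcomp Require Import reals.
Set Implicit Arguments. Unset Strict Implicit. Unset Printing Implicit Defensive.
Import Order.TTheory GRing.Theory Num.Theory.
Local Open Scope ring_scope.

(* If u_S(a_i, w) = u_S(a_j, w), the row u_S(a_j) - u_S(a_i) of T^i vanishes
   at w.  Together with the |Omega| - 1 identity rows e_k, k <> w, it forms a
   square row-submatrix of T^i whose w-th column is zero, so that submatrix is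
   singular, contradicting scant-indifferences. *)

Lemma mxrank_col0 (F : fieldType) (m n : nat) (M : 'M[F]_(m, n)) (w : 'I_n) :
  col w M = 0 -> (\rank M < n)%N.
Proof.
move=> Mw0.
have ker_e : (delta_mx (0 : 'I_1) w <= kermx M^T)%MS.
  apply/sub_kermxP.
  by rewrite -(trmxK (delta_mx 0 w)) -trmx_mul trmx_delta -colE Mw0 trmx0.
by have := mxrankS ker_e; rewrite mxrank_delta mxrank_ker mxrank_tr subn_gt0.
Qed.

Definition indiff_rows (nA nO : nat) (j : 'I_nA) (w : 'I_nO) : {set rowlab nA nO} :=
  inl (false, j) |: [set inr k | k in [set~ w]].

Section IndifferenceRows.

Variables (nA nO : nat) (j : 'I_nA) (w : 'I_nO).

Lemma indiff_rows_sub (i : 'I_nA) : i != j -> indiff_rows j w \subset Trows nO i.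
Proof.
move=> ij; apply/subsetP => x; rewrite !inE.
by case/orP => [/eqP -> | /imsetP [k _ ->]]; rewrite // eq_sym.
Qed.

Lemma card_indiff_rows : #|indiff_rows j w| = nO.
Proof.
have inr_inj : injective (@inr (bool * 'I_nA) 'I_nO) by move=> ? ? [].
have j_notin : inl (false, j) \notin [set inr k | k in [set~ w]].
  by apply/imsetP => -[].
rewrite cardsU1 j_notin card_imset // cardsC1 card_ord add1n prednK //.
exact: leq_ltn_trans (ltn_ord w).
Qed.

Lemma col_Tsub_indiff_rows (R : realType) (uS uR : 'I_nA -> 'I_nO -> R) (i : 'I_nA) :
  uS i w = uS j w -> col w (Tsub uS uR i (indiff_rows j w)) = 0.
Proof.
move=> eq_ij; apply/matrixP => k l; rewrite !mxE.
have := enum_valP k; rewrite !inE.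
case/orP => [/eqP -> | /imsetP [k' k'w ->]] /=; rewrite mxE.
  by rewrite eq_ij subrr.
by move: k'w; rewrite !inE eq_sym => /negbTE ->.
Qed.

End IndifferenceRows.

Theorem lemma3 (R : realType) (nA nO : nat) (hA : (0 < nA)%N) (hO : (0 < nO)%N)
  (uS uR : 'I_nA -> 'I_nO -> R) :
  environment uS uR -> scant_indifferences uS uR ->
  forall (w : 'I_nO) (i j : 'I_nA), i != j -> uS i w != uS j w.
Proof.
move=> _ scant w i j ij; apply/eqP => eq_ij.
have /eqP := scant i _ (indiff_rows_sub w ij).
rewrite [X in minn X _]card_indiff_rows minnn => rank_full.
by have := mxrank_col0 (col_Tsub_indiff_rows uR eq_ij); rewrite rank_full ltnn.
Qed.
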